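(* Let $\alpha,\beta$ be parameters and $q$ an indeterminate, and let $E_{n,k}(\alpha,\beta,q)$ ($n\ge k\ge 0$) be the numbers defined in the context. For all integers $n\geq k\geq 0$, \[ E_{n,k}(\alpha,\beta,q)=\sum_{\sigma\in\mathfrak{S}_{n+1,k}}[\alpha]^{\mathrm{lrmin}(\sigma)-1}[\beta]^{\mathrm{rlmin}(\sigma)-1}q^{\widetilde{\mathrm{maj}}(\sigma)}, \] where $\mathfrak{S}_{n+1,k}$ is the set of permutations of $\{1,\dots,n+1\}$ with exactly $k$ descents and, for $\sigma\in\mathfrak{S}_{n+1}$, \[ \widetilde{\mathrm{maj}}(\sigma)=(1+\mathrm{des}(\sigma)-\mathrm{lrmin}(\sigma))(\alpha-1)+(n+1-\mathrm{rlmin}(\sigma))(\beta-1)+\mathrm{maj}(\sigma). \]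
   Context: For a real $x$, $[x]=\frac{1-q^x}{1-q}$. The numbers $E_{n,k}(\alpha,\beta,q)$ (in the paper, $E_{n,k}(\alpha,\beta,q)=A(k,n-k\,|\,\alpha,\beta)_q$, Gaudin's $q$-analogue of the Carlitz–Scoville numbers obtained by normalizing Nadeau–Tewari remixed Eulerian numbers) are determined by $E_{0,0}=1$, $E_{n,k}=0$ if $k\notin\{0,\dots,n\}$, and for $n\ge1$ \[ E_{n,k}(\alpha,\beta,q)=q^{\beta+k-1}[n-k+\alpha]E_{n-1,k-1}(\alpha,\beta,q)+[k+\beta]E_{n-1,k}(\alpha,\beta,q). \] For $\sigma=\sigma_1\cdots\sigma_m\in\mathfrak{S}_m$: $\mathrm{des}(\sigma)=|\{i\in[m-1]:\sigma_i>\sigma_{i+1}\}|$; $\mathrm{maj}(\sigma)=\sum_{\sigma_i>\sigma_{i+1}}i$; $\mathrm{lrmin}(\sigma)=|\{i:\sigma_i<\sigma_j\ \forall j<i\}|$ (left-to-right minima); $\mathrm{rlmin}(\sigma)=|\{i:\sigma_i<\sigma_j\ \forall j>i\}|$ (right-to-left minima). *)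

From HB Require Import structures.
From mathcomp Require Import all_boot all_order all_algebra all_fingroup.
From mathcomp Require Import all_classical all_reals.
From mathcomp Require Import exp.
Set Implicit Arguments. Unset Strict Implicit. Unset Printing Implicit Defensive.
Import Order.TTheory GRing.Theory Num.Theory.
Local Open Scope ring_scope.

Section Defs.
Variable R : realType.

Definition qint (q x : R) : R := (1 - q `^ x) / (1 - q).

Fixpoint Enk (q a b : R) (n k : nat) : R :=
  match n with
  | 0%N => if k == 0%N then 1 else 0
  | n'.+1 =>
      (match k with
       | 0%N => 0
       | k'.+1 => q `^ (b + k%:R - 1) * qint q (n%:R - k%:R + a) * Enk q a b n' k'
       end) + qint q (k%:R + b) * Enk q a b n' k
  end.
End Defs.

(* Statistics on words w = w_1 ... w_m (stored 0-indexed in a seq nat). *)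
Definition wdes (w : seq nat) : nat :=
  count (fun i => nth 0%N w i.+1 < nth 0%N w i)%N (iota 0 (size w).-1).
Definition wmaj (w : seq nat) : nat :=
  (\sum_(i <- iota 0 (size w).-1 | (nth 0%N w i.+1 < nth 0%N w i)%N) i.+1)%N.
Definition wlrmin (w : seq nat) : nat :=
  count (fun i => all (fun j => nth 0%N w i < nth 0%N w j)%N (iota 0 i))
        (iota 0 (size w)).
Definition wrlmin (w : seq nat) : nat :=
  count (fun i => all (fun j => nth 0%N w i < nth 0%N w j)%N
                      (iota i.+1 (size w - i.+1)))
        (iota 0 (size w)).

(* one-line word of a permutation of {0,...,m-1} (values shifted by one
   from {1,...,m}, which does not affect any statistic) *)
Definition pword (m : nat) (s : 'S_m) : seq nat := [seq val (s i) | i <- enum 'I_m].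
Definition des m (s : 'S_m) := wdes (pword s).
Definition maj m (s : 'S_m) := wmaj (pword s).
Definition lrmin m (s : 'S_m) := wlrmin (pword s).
Definition rlmin m (s : 'S_m) := wrlmin (pword s).

Definition majt (R : realType) (a b : R) (n : nat) (s : 'S_n.+1) : R :=
  (1 + (des s)%:R - (lrmin s)%:R) * (a - 1)
  + ((n.+1)%:R - (rlmin s)%:R) * (b - 1) + (maj s)%:R.

(* Every permutation of {0,...,m} arises in exactly one way by inserting its
   largest letter m into a permutation of {0,...,m-1}.  Inserting m in front
   adds a descent and a left-to-right minimum, appending it adds a right-to-left
   minimum, and inserting it into one of the inner gaps changes neither minimum
   and adds a descent exactly when the gap is an ascent.  Tracking maj as well,
   the part F(m,k) with k descents of the enumerator of A^(lrmin-1) B^(rlmin-1) q^maj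
   satisfies
     F(m+1,k) = (B + q + ... + q^k) F(m,k) + (A q^k + q^(k+1) + ... + q^m) F(m,k-1).
   For A = [alpha] / q^(alpha-1) and B = [beta] / q^(beta-1) the numbers
   q^(k(alpha-1) + n(beta-1)) F(n+1,k) thus obey the recurrence defining E(n,k),
   and the same rescaling, done term by term, yields the right-hand side. *)

From HB Require Import structures.
From mathcomp Require Import all_boot all_order all_algebra all_fingroup.
From mathcomp Require Import all_classical all_reals.
From mathcomp Require Import exp.
From mathcomp Require Import zify ring.
Set Implicit Arguments. Unset Strict Implicit. Unset Printing Implicit Defensive.

Lemma iota1 n : iota 1 n = map succn (iota 0 n).
Proof. by rewrite -(iotaDl 1 0). Qed.

Lemma count_iota_nth (T : Type) (x0 : T) (P : pred T) (s : seq T) :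
  count P s = count (fun i => P (nth x0 s i)) (iota 0 (size s)).
Proof. by rewrite -{1}(mkseq_nth x0 s) /mkseq count_map. Qed.

Lemma all_iota_nth (T : Type) (x0 : T) (P : pred T) (s : seq T) :
  all P s = all (fun i => P (nth x0 s i)) (iota 0 (size s)).
Proof. by rewrite -{1}(mkseq_nth x0 s) /mkseq all_map. Qed.

Fixpoint descents (w : seq nat) : seq bool :=
  match w with
  | x :: ((y :: _) as t) => (y < x) :: descents t
  | _ => [::]
  end.

Fixpoint bmaj (D : seq bool) : nat :=
  if D is b :: D' then b + count id D' + bmaj D' else 0.

Lemma descentsE w :
  descents w = [seq nth 0 w i.+1 < nth 0 w i | i <- iota 0 (size w).-1].
Proof.
elim: w => [|x [|y t] IH] //.
rewrite -[descents _]/((y < x) :: descents (y :: t)) IH /= iota1 -map_comp.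
by congr (_ :: _).
Qed.

Lemma size_descents w : size (descents w) = (size w).-1.
Proof. by rewrite descentsE size_map size_iota. Qed.

Lemma wdes_descents w : wdes w = count id (descents w).
Proof. by rewrite descentsE count_map. Qed.

Lemma wdes_le w : wdes w <= (size w).-1.
Proof. by rewrite wdes_descents -size_descents count_size. Qed.

Lemma bmaj_sum D : bmaj D = \sum_(i <- iota 0 (size D) | nth false D i) i.+1.
Proof.
elim: D => [|b D IH] /=; first by rewrite big_nil.
rewrite big_cons /= iota1 big_map IH.
rewrite [in RHS](eq_bigr (fun j => j.+1 + 1)); last by move=> j _; rewrite addn1.
rewrite big_split /= sum1_count -(count_iota_nth false id).
by case: b => /=; lia.
Qed.

Lemma wmaj_descents w : wmaj w = bmaj (descents w).
Proof.
rewrite bmaj_sum size_descents /wmaj big_seq_cond [RHS]big_seq_cond.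
apply: eq_bigl => i; rewrite mem_iota /= add0n.
case Hi: (i < (size w).-1) => //=.
by rewrite descentsE (nth_map 0) ?size_iota // nth_iota.
Qed.

Fixpoint lrmin_below (m : nat) (w : seq nat) : nat :=
  if w is x :: t then
    if x < m then (lrmin_below x t).+1 else lrmin_below m t
  else 0.

Lemma count_lrmin_cons (P : pred nat) x t :
  count (fun i => P (nth 0 (x :: t) i) &&
                  all (fun j => nth 0 (x :: t) i < nth 0 (x :: t) j) (iota 0 i))
        (iota 0 (size (x :: t))) =
  P x + count (fun i => P (nth 0 t i) && ((nth 0 t i < x) &&
                        all (fun j => nth 0 t i < nth 0 t j) (iota 0 i)))
              (iota 0 (size t)).
Proof.
rewrite /= andbT iota1 count_map; congr (_ + _); apply: eq_count => i /=.
by rewrite iota1 all_map.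
Qed.

Lemma lrmin_belowE m w :
  lrmin_below m w =
  count (fun i => (nth 0 w i < m) && all (fun j => nth 0 w i < nth 0 w j) (iota 0 i))
        (iota 0 (size w)).
Proof.
elim: w m => [|x t IH] m //.
rewrite (count_lrmin_cons (fun y => y < m)) /= !IH.
have [Hxm|Hmx] := ltnP x m; rewrite ?add1n ?add0n; [congr S|];
  apply: eq_count => i /=; rewrite andbA.
  by rewrite (andb_idl (fun h => ltn_trans h Hxm)).
by rewrite (andb_idr (fun h => leq_trans h Hmx)).
Qed.

Lemma wlrmin_cons x t : wlrmin (x :: t) = (lrmin_below x t).+1.
Proof. by rewrite /wlrmin (count_lrmin_cons predT) lrmin_belowE. Qed.

Lemma wrlmin_cons x t : wrlmin (x :: t) = all (fun y => x < y) t + wrlmin t.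
Proof.
rewrite /wrlmin /= subn1 /= iota1 count_map; congr (_ + _).
  by rewrite all_map [in RHS](all_iota_nth 0).
apply: eq_count => i /=; rewrite subSS.
by rewrite (_ : i.+2 = 1 + i.+1) // iotaDl all_map.
Qed.

Lemma wlrmin_gt0 w : w != [::] -> 0 < wlrmin w.
Proof. by case: w => [|x t] // _; rewrite wlrmin_cons. Qed.

Lemma wrlmin_gt0 w : w != [::] -> 0 < wrlmin w.
Proof.
elim: w => [|x [|y t] IH] // _.
by rewrite wrlmin_cons; have := IH isT; lia.
Qed.

Section InsertAt.
Variable T : Type.
Implicit Types (x : T) (w : seq T).

Definition ins_at p x w := take p w ++ x :: drop p w.

Definition del_at p w := take p w ++ drop p.+1 w.

Lemma ins_at0 x w : ins_at 0 x w = x :: w.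
Proof. by rewrite /ins_at take0 drop0. Qed.

Lemma ins_atS p x y w : ins_at p.+1 x (y :: w) = y :: ins_at p x w.
Proof. by []. Qed.

Lemma all_ins_at (P : pred T) p x w : all P (ins_at p x w) = P x && all P w.
Proof. by rewrite /ins_at all_cat /= -{3}(cat_take_drop p w) all_cat andbCA. Qed.

Lemma ins_atK p x w : p <= size w -> del_at p (ins_at p x w) = w.
Proof.
move=> Hp; have Hs : size (take p w) = p by rewrite size_takel.
rewrite /del_at /ins_at take_size_cat // drop_cat Hs ltnNge leqnSn /= subSnn /=.
by rewrite drop0 cat_take_drop.
Qed.

Lemma del_atK x0 p w : p < size w -> ins_at p (nth x0 w p) (del_at p w) = w.
Proof.
move=> Hp; have Hs : size (take p w) = p by rewrite size_takel // ltnW.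
by rewrite /ins_at /del_at take_size_cat // drop_size_cat // -drop_nth // cat_take_drop.
Qed.

End InsertAt.

Section InsertAtEq.
Variable T : eqType.
Implicit Types (x : T) (w : seq T).

Lemma perm_ins_at p x w : perm_eq (ins_at p x w) (x :: w).
Proof. by rewrite /ins_at -cat1s perm_catCA cat_take_drop. Qed.

Lemma index_ins_at p x w : x \notin w -> p <= size w -> index x (ins_at p x w) = p.
Proof.
move=> Hx Hp; rewrite /ins_at index_cat size_takel //.
have -> : (x \in take p w) = false by apply/negP => /mem_take; apply/negP.
by rewrite /= eqxx addn0.
Qed.

Lemma ins_at_inj x p1 w1 p2 w2 : x \notin w1 -> x \notin w2 ->
  p1 <= size w1 -> p2 <= size w2 ->
  ins_at p1 x w1 = ins_at p2 x w2 -> (w1, p1) = (w2, p2).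
Proof.
move=> H1 H2 Hp1 Hp2 Heq.
have Ep : p1 = p2 by rewrite -(index_ins_at H1 Hp1) -(index_ins_at H2 Hp2) Heq.
subst p2; congr (_, _).
by rewrite -(ins_atK x Hp1) -(ins_atK x Hp2) Heq.
Qed.

End InsertAtEq.

Section InsertMaximum.
Variable M : nat.
Implicit Types w : seq nat.

Definition below_max w := all (fun x => x < M) w.

Lemma lrmin_below_ins_at m p w :
  m <= M -> below_max w -> lrmin_below m (ins_at p M w) = lrmin_below m w.
Proof.
elim: w m p => [|x t IH] m p Hm; first by rewrite /ins_at /= ltnNge Hm.
move=> /andP [Hx Ht]; case: p => [|p].
  by rewrite ins_at0 /= [M < m]ltnNge Hm.
by rewrite ins_atS /=; case: ltnP => _; rewrite IH //; lia.
Qed.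

Lemma wlrmin_ins_at p w : w != [::] -> below_max w ->
  wlrmin (ins_at p M w) = (p == 0) + wlrmin w.
Proof.
case: w => [|x t] // _ /andP [Hx Ht].
case: p => [|p]; first by rewrite ins_at0 !wlrmin_cons /= Hx.
by rewrite ins_atS !wlrmin_cons lrmin_below_ins_at //; lia.
Qed.

Lemma wrlmin_ins_at p w : below_max w ->
  wrlmin (ins_at p M w) = (size w <= p) + wrlmin w.
Proof.
elim: w p => [|x t IH] p; first by rewrite /ins_at /= wrlmin_cons.
move=> /andP [Hx Ht]; case: p => [|p].
  by rewrite ins_at0 wrlmin_cons /= ltnNge (ltnW Hx).
by rewrite ins_atS wrlmin_cons all_ins_at Hx IH // wrlmin_cons /=; lia.
Qed.

Lemma descents_ins_front w : w != [::] -> below_max w ->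
  descents (ins_at 0 M w) = true :: descents w.
Proof. by case: w => [|x t] // _ /andP [Hx _]; rewrite ins_at0 /= Hx. Qed.

Lemma descents_ins_back p w : w != [::] -> below_max w -> size w <= p ->
  descents (ins_at p M w) = rcons (descents w) false.
Proof.
move=> Hw Hall Hp; rewrite /ins_at take_oversize // drop_oversize //.
elim: w Hw Hall {Hp} => [|x [|y t] IH] // _ /andP [Hx Ht].
  by rewrite /= ltnNge (ltnW Hx).
by rewrite !cat_cons -[descents _]/((y < x) :: descents (y :: t ++ [:: M])) IH.
Qed.

Definition peak_at (D : seq bool) j := take j D ++ false :: true :: drop j.+1 D.

Lemma descents_ins_inner p w : below_max w -> 0 < p < size w ->
  descents (ins_at p M w) = peak_at (descents w) p.-1.
Proof.
elim: w p => [|x t IH] [|p] // /andP [Hx Ht] Hp.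
rewrite ins_atS; case: p Hp => [|p] Hp.
  case: t IH Ht Hp => [|y t] IH; first by move=> _ /=; lia.
  by move=> /andP [Hy _] _; rewrite ins_at0 /peak_at /= drop0 ltnNge (ltnW Hx) Hy.
case: t IH Ht Hp => [|y t] IH Ht Hp; first by move: Hp => /=; lia.
by rewrite ins_atS -[descents _]/((y < x) :: descents (ins_at p.+1 M (y :: t))) IH.
Qed.

End InsertMaximum.

Lemma count_peak_at D j : j < size D ->
  count id (peak_at D j) = count id D + ~~ nth false D j.
Proof.
move=> Hj; rewrite /peak_at -{3}(cat_take_drop j D) (drop_nth false Hj).
by rewrite !count_cat /=; case: (nth false D j) => /=; lia.
Qed.

Lemma bmaj_peak_at D j : j < size D ->
  bmaj (peak_at D j) = bmaj D +
    (if nth false D j then (count id (drop j.+1 D)).+1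
     else j.+2 + count id (drop j.+1 D)).
Proof.
elim: D j => [|b D IH] [|j] //= Hj; first by rewrite /peak_at /= drop0; case: b => /=; lia.
have := IH j Hj; have := count_peak_at Hj; rewrite /peak_at /= => Hc Hm.
by rewrite Hc Hm; case: (nth false D j) => /=; lia.
Qed.

Lemma count_rcons_false D : count id (rcons D false) = count id D.
Proof. by rewrite -cats1 count_cat /=; lia. Qed.

Lemma bmaj_rcons_false D : bmaj (rcons D false) = bmaj D.
Proof. by elim: D => [|b D IH] //; rewrite rcons_cons /= IH count_rcons_false. Qed.

Fixpoint perm_words (m : nat) : seq (seq nat) :=
  if m is m'.+1 then [seq ins_at p m' w | w <- perm_words m', p <- iota 0 m]
  else [:: [::]].

Lemma perm_iotaS m : perm_eq (iota 0 m.+1) (m :: iota 0 m).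
Proof. by rewrite -addn1 iotaD cats1 perm_rcons. Qed.

Lemma mem_perm_words m t : (t \in perm_words m) = perm_eq t (iota 0 m).
Proof.
elim: m t => [|m IH] t; first by rewrite inE; apply/eqP/perm_nilP.
apply/allpairsP/idP => [[[w p]] [/= Hw _ ->]|Ht].
  apply: (perm_trans (perm_ins_at _ _ _)).
  by rewrite perm_sym (permPl (perm_iotaS m)) perm_cons perm_sym -IH.
have Hm : m \in t by rewrite (perm_mem Ht) mem_iota add0n ltnSn.
have Hsz : size t = m.+1 by rewrite (perm_size Ht) size_iota.
set p := index m t.
have Hp : p < size t by rewrite index_mem.
have Ht' := del_atK 0 Hp; rewrite nth_index // in Ht'.
exists (del_at p t, p) => /=; split => //.
- change (del_at p t \in perm_words m); rewrite IH -(perm_cons m).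
  apply: (perm_trans _ (perm_iotaS m)); apply: (perm_trans _ Ht).
  by have := perm_ins_at p m (del_at p t); rewrite Ht' perm_sym.
- by rewrite -/(iota 0 m.+1) mem_iota add0n -Hsz.
Qed.

Lemma size_perm_words m w : w \in perm_words m -> size w = m.
Proof. by rewrite mem_perm_words => /perm_size ->; rewrite size_iota. Qed.

Lemma perm_words_below m w : w \in perm_words m -> below_max m w.
Proof.
by rewrite mem_perm_words => /perm_mem Hw; apply/allP => x; rewrite Hw mem_iota.
Qed.

Lemma uniq_perm_words m : uniq (perm_words m).
Proof.
elim: m => [|m IH] //.
change (uniq [seq ins_at p m w | w <- perm_words m, p <- iota 0 m.+1]).
apply: allpairs_uniq => //; first exact: iota_uniq.
move=> [w1 p1] [w2 p2] H1 H2 /= Heq.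
have /allpairsP [[w1' p1'] [/= Hw1 Hp1 [E1 E2]]] := H1.
have /allpairsP [[w2' p2'] [/= Hw2 Hp2 [E3 E4]]] := H2.
subst.
have notin w : w \in perm_words m -> m \notin w.
  by rewrite mem_perm_words => /perm_mem ->; rewrite mem_iota ltnn andbF.
move: Hp1 Hp2; rewrite -/(iota 0 m.+1) !mem_iota /= => Hp1 Hp2.
by apply: (ins_at_inj (notin _ Hw1) (notin _ Hw2)) => //;
  rewrite (size_perm_words Hw1, size_perm_words Hw2).
Qed.

Lemma size_pword m (s : 'S_m) : size (pword s) = m.
Proof. by rewrite /pword size_map size_enum_ord. Qed.

Lemma pword_inj m : injective (@pword m).
Proof.
move=> s t H; apply/permP => i; apply/val_inj.
have := congr1 (fun w => nth 0 w i) H.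
by rewrite /pword !(nth_map i) -?enumT ?size_enum_ord // nth_ord_enum.
Qed.

Lemma perm_iota_pword m (s : 'S_m) : perm_eq (pword s) (iota 0 m).
Proof.
apply: uniq_perm; [|exact: iota_uniq|].
  by rewrite map_inj_uniq ?enum_uniq // => i j /val_inj; apply: perm_inj.
move=> x; rewrite mem_iota add0n /=; apply/mapP/idP => [[i _ ->]|Hx]; first exact: ltn_ord.
by exists ((s^-1)%g (Ordinal Hx)); rewrite ?mem_enum ?permKV.
Qed.

Lemma pword_onto m w : perm_eq w (iota 0 m) -> exists s : 'S_m, pword s = w.
Proof.
move=> Hw.
have Hsz : size w = m by rewrite (perm_size Hw) size_iota.
have Hu : uniq w by rewrite (perm_uniq Hw) iota_uniq.
have Hlt (i : 'I_m) : nth 0 w i < m.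
  have Hi : i < size w by rewrite Hsz.
  by move: (mem_nth 0 Hi); rewrite (perm_mem Hw) mem_iota.
pose f (i : 'I_m) : 'I_m := Ordinal (Hlt i).
have finj : injective f.
  move=> i j /(congr1 val) /eqP /=.
  by rewrite nth_uniq ?Hsz // => /eqP; apply: val_inj.
exists (perm finj); rewrite /pword (eq_map (g := nth 0 w \o val)); last first.
  by move=> i; rewrite permE.
by rewrite map_comp val_enum_ord -Hsz -/(mkseq (nth 0 w) (size w)) mkseq_nth.
Qed.

Lemma big_pword (V : nmodType) m (F : seq nat -> V) :
  (\sum_(s : 'S_m) F (pword s) = \sum_(w <- perm_words m) F w)%R.
Proof.
rewrite -(big_map (@pword m) predT F); apply: perm_big; apply: uniq_perm.
- by rewrite map_inj_uniq ?index_enum_uniq //; apply: pword_inj.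
- exact: uniq_perm_words.
move=> w; rewrite mem_perm_words; apply/mapP/idP => [[s _ ->]|].
  exact: perm_iota_pword.
by move=> /pword_onto [s <-]; exists s; rewrite ?mem_index_enum.
Qed.

Import Order.TTheory GRing.Theory Num.Theory.
Local Open Scope ring_scope.

Section Weights.
Variable R : comNzRingType.
Variables q A B : R.
Implicit Types w : seq nat.

Definition wweight w := A ^+ (wlrmin w).-1 * B ^+ (wrlmin w).-1 * q ^+ wmaj w.

Definition wenum m k := \sum_(w <- perm_words m) (if wdes w == k then wweight w else 0).

Lemma sum_descent_gaps D :
  \sum_(j <- iota 0 (size D))
     (if nth false D j then q ^+ (count id (drop j.+1 D)).+1 else 0) =
  \sum_(1 <= i < (count id D).+1) q ^+ i.
Proof.
elim: D => [|c D IH]; first by rewrite big_nil big_geq.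
rewrite /= big_cons iota1 big_map /= drop0 IH.
case: c => /=; last by rewrite add0r add0n.
by rewrite add1n [RHS]big_nat_recr //= addrC.
Qed.

Lemma sum_ascent_gaps D o :
  \sum_(j <- iota 0 (size D))
     (if nth false D j then 0 else q ^+ (o + j + 1 + count id (drop j.+1 D))) =
  \sum_(o + count id D + 1 <= i < o + size D + 1) q ^+ i.
Proof.
elim: D o => [|c D IH] o; first by rewrite big_nil big_geq // addn0.
rewrite /= big_cons iota1 big_map /= drop0.
rewrite (eq_bigr (fun j => if nth false D j then 0
                          else q ^+ (o.+1 + j + 1 + count id (drop j.+1 D)))); last first.
  by move=> j _; rewrite addSnnS.
rewrite IH; case: c => /=.
  by rewrite add0r; congr (\sum_(_ <= _ < _) _); lia.
rewrite add0n addn0 (big_ltn (m := o + count id D + 1)); last first.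
  by have := count_size id D; lia.
by congr (_ ^+ _ + \sum_(_ <= _ < _) _); lia.
Qed.

Section InsertMaximumWeights.
Variables (M : nat) (w : seq nat).
Hypotheses (w_neq0 : w != [::]) (w_below : below_max M w).

Lemma wdes_ins_front : wdes (ins_at 0 M w) = (wdes w).+1.
Proof. by rewrite !wdes_descents descents_ins_front. Qed.

Lemma wweight_ins_front : wweight (ins_at 0 M w) = A * q ^+ (wdes w).+1 * wweight w.
Proof.
rewrite /wweight wmaj_descents descents_ins_front // wlrmin_ins_at // wrlmin_ins_at //.
have -> : (size w <= 0)%N = false by case: (w) w_neq0.
rewrite /= add0n add1n -wdes_descents -wmaj_descents -{1}(prednK (wlrmin_gt0 w_neq0)).
by rewrite exprS exprD; ring.
Qed.

Lemma wdes_ins_back p : (size w <= p)%N -> wdes (ins_at p M w) = wdes w.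
Proof. by move=> Hp; rewrite !wdes_descents descents_ins_back // count_rcons_false. Qed.

Lemma wweight_ins_back p : (size w <= p)%N -> p != 0%N ->
  wweight (ins_at p M w) = B * wweight w.
Proof.
move=> Hp Hp0; rewrite /wweight wmaj_descents descents_ins_back // bmaj_rcons_false.
rewrite wlrmin_ins_at // wrlmin_ins_at // Hp (negbTE Hp0) /= add0n -wmaj_descents.
by rewrite -{1}(prednK (wrlmin_gt0 w_neq0)) exprS; ring.
Qed.

Lemma wdes_ins_inner j : (j.+1 < size w)%N ->
  wdes (ins_at j.+1 M w) = (wdes w + ~~ nth false (descents w) j)%N.
Proof.
move=> Hj; rewrite !wdes_descents descents_ins_inner // count_peak_at //.
by rewrite size_descents; lia.
Qed.

Lemma wweight_ins_inner j : (j.+1 < size w)%N ->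
  wweight (ins_at j.+1 M w) = wweight w *
    q ^+ (if nth false (descents w) j then (count id (drop j.+1 (descents w))).+1
          else j.+2 + count id (drop j.+1 (descents w))).
Proof.
move=> Hj; have Hj' : (j < size (descents w))%N by rewrite size_descents; lia.
rewrite /wweight !wmaj_descents descents_ins_inner //= bmaj_peak_at //.
rewrite wlrmin_ins_at // wrlmin_ins_at // leqNgt Hj /= !add0n.
by rewrite exprD mulrA.
Qed.

Lemma sum_ins_inner k :
  \sum_(j <- iota 0 (size w).-1)
     (if wdes (ins_at j.+1 M w) == k then wweight (ins_at j.+1 M w) else 0) =
  wweight w * ((wdes w == k)%:R * \sum_(1 <= i < (wdes w).+1) q ^+ i
    + ((wdes w).+1 == k)%:R * \sum_((wdes w).+2 <= i < (size w).+1) q ^+ i).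
Proof.
set D := descents w; set d := wdes w.
have Hw : (0 < size w)%N by rewrite lt0n size_eq0.
have HD : size D = (size w).-1 by rewrite size_descents.
rewrite big_seq (eq_bigr (fun j =>
    (d == k)%:R * wweight w * (if nth false D j then q ^+ (count id (drop j.+1 D)).+1 else 0)
  + (d.+1 == k)%:R * wweight w *
      (if nth false D j then 0 else q ^+ (1 + j + 1 + count id (drop j.+1 D))))); last first.
  move=> j; rewrite mem_iota add0n => /andP [_ Hj].
  have Hj1 : (j.+1 < size w)%N by lia.
  rewrite wdes_ins_inner // wweight_ins_inner // -/D -/d.
  case: (nth false D j) => /=; rewrite ?addn0 ?addn1 ?add1n.
    by case: (d == k); rewrite /= ?mulr1 ?mulr0 ?mul1r ?mul0r ?addr0.
  by case: (d.+1 == k); rewrite /= ?mulr1 ?mulr0 ?mul1r ?mul0r ?add0r.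
rewrite -big_seq big_split /= -!mulr_sumr -HD sum_descent_gaps sum_ascent_gaps.
rewrite -wdes_descents -/d HD (_ : (1 + d + 1)%N = d.+2); last by lia.
rewrite (_ : (1 + (size w).-1 + 1)%N = (size w).+1); last by lia.
by ring.
Qed.

Lemma sum_ins_at k :
  \sum_(p <- iota 0 (size w).+1)
     (if wdes (ins_at p M w) == k then wweight (ins_at p M w) else 0) =
  wweight w * ((wdes w == k)%:R * (B + \sum_(1 <= i < (wdes w).+1) q ^+ i)
    + ((wdes w).+1 == k)%:R * (q ^+ (wdes w).+1 * A
                               + \sum_((wdes w).+2 <= i < (size w).+1) q ^+ i)).
Proof.
have Hw : (0 < size w)%N by rewrite lt0n size_eq0.
have -> : iota 0 (size w).+1 = 0%N :: (map succn (iota 0 (size w).-1) ++ [:: size w]).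
  rewrite /= -iota1; congr (_ :: _).
  by rewrite -{1}(prednK Hw) -[(size w).-1.+1]addn1 iotaD add1n prednK.
rewrite big_cons big_cat big_seq1 big_map sum_ins_inner.
rewrite wdes_ins_front wweight_ins_front wdes_ins_back // wweight_ins_back //; last by rewrite -lt0n.
by case: (wdes w == k); case: ((wdes w).+1 == k); rewrite /= ?mul0r ?mul1r ?addr0 ?add0r; ring.
Qed.

End InsertMaximumWeights.

Lemma wenum1 k : wenum 1%N k = (k == 0%N)%:R.
Proof.
rewrite /wenum (_ : perm_words 1 = [:: [:: 0%N]]) // big_seq1 /wweight wlrmin_cons wrlmin_cons wmaj_descents.
by case: k => [|k] //=; rewrite !expr0 !mulr1.
Qed.

Lemma wenum_eq0 m k : (0 < m)%N -> (m <= k)%N -> wenum m k = 0.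
Proof.
move=> Hm Hk; rewrite /wenum big_seq big1 // => w Hw.
have := wdes_le w; rewrite (size_perm_words Hw) => Hd.
by case: eqP => // E; lia.
Qed.

Lemma wenum_rec m k : (0 < m)%N ->
  wenum m.+1 k =
    (if k is k'.+1 then (q ^+ k * A + \sum_(k.+1 <= j < m.+1) q ^+ j) * wenum m k'
     else 0)
  + (B + \sum_(1 <= j < k.+1) q ^+ j) * wenum m k.
Proof.
move=> Hm; rewrite /wenum.
change (perm_words m.+1) with [seq ins_at p m w | w <- perm_words m, p <- iota 0 m.+1].
rewrite big_allpairs_dep /= big_seq.
rewrite (eq_bigr (fun w => (B + \sum_(1 <= j < k.+1) q ^+ j) * (if wdes w == k then wweight w else 0)
   + (if k is k'.+1 then (q ^+ k * A + \sum_(k.+1 <= j < m.+1) q ^+ j) *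
        (if wdes w == k' then wweight w else 0) else 0))); last first.
  move=> w Hw; have Hsz := size_perm_words Hw.
  have Hw0 : w != [::] by rewrite -size_eq0 Hsz -lt0n.
  have := sum_ins_at Hw0 (perm_words_below Hw); rewrite Hsz => ->.
  case: k => [|k]; first by case: eqP => [->|_] /=; ring.
  rewrite eqSS; case: eqP => [E1|N1]; case: eqP => [E2|N2]; try (exfalso; lia).
  - by rewrite E1 /=; ring.
  - by rewrite E2 /=; ring.
  - by rewrite /=; ring.
rewrite -big_seq big_split /= -mulr_sumr addrC; congr (_ + _).
by case: k => [|k]; [rewrite big1 | rewrite -mulr_sumr].
Qed.

End Weights.

Lemma sum_geom (F : fieldType) (q : F) u v : q != 1 -> (u <= v)%N ->
  \sum_(u <= j < v) q ^+ j = (q ^+ u - q ^+ v) / (1 - q).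
Proof.
move=> q_neq1 Huv; have subq_neq0 : 1 - q != 0 by rewrite subr_eq0 eq_sym.
apply: (canRL (mulfK subq_neq0)).
elim: v Huv => [|v IH] Huv.
  by move: Huv; rewrite leqn0 => /eqP ->; rewrite big_geq // subrr mul0r.
case: (ltngtP u v.+1) Huv => // [Hlt|->] _; last by rewrite big_geq // subrr mul0r.
by rewrite big_nat_recr //= mulrDl IH // exprS; ring.
Qed.

Section QAnalogue.
Variable R : realType.
Variables q a b : R.
Hypotheses (q_gt0 : 0 < q) (q_neq1 : q != 1).

Let q_neq0 : q != 0. Proof. by rewrite gt_eqF. Qed.
Let subq_neq0 : 1 - q != 0. Proof. by rewrite subr_eq0 eq_sym. Qed.

Lemma qpowD x y : q `^ (x + y) = q `^ x * q `^ y.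
Proof. by rewrite powRD // q_neq0 implybT. Qed.

Lemma qpow_nat n : q `^ n%:R = q ^+ n.
Proof. by rewrite powR_mulrn // ltW. Qed.

Lemma qpow_natM n x : q `^ (n%:R * x) = (q `^ x) ^+ n.
Proof. by rewrite mulrC powRrM powR_mulrn // powR_ge0. Qed.

Lemma qpow_lin (i j : nat) x y :
  q `^ (i%:R * x + j%:R * y) = (q `^ x) ^+ i * (q `^ y) ^+ j.
Proof. by rewrite qpowD !qpow_natM. Qed.

Lemma qpow_neq0 x : q `^ x != 0.
Proof. by rewrite gt_eqF // powR_gt0. Qed.

Lemma qpow_pred x : q `^ x = q `^ (x - 1) * q.
Proof. by rewrite -[X in _ * X](powRr1 (ltW q_gt0)) -qpowD subrK. Qed.

Lemma Enk_eq0 n k : (n < k)%N -> Enk q a b n k = 0.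
Proof.
elim: n k => [|n IH] [|k] //= Hk.
by rewrite !IH ?mulr0 ?add0r //; lia.
Qed.

Local Notation qa := (q `^ (a - 1)).
Local Notation qb := (q `^ (b - 1)).
Local Notation Aw := (qint q a / qa).
Local Notation Bw := (qint q b / qb).

Lemma Enk_wenum n k : Enk q a b n k = qa ^+ k * qb ^+ n * wenum q Aw Bw n.+1 k.
Proof.
elim: n k => [|n IH] k.
  by rewrite wenum1 /=; case: k => [|k] /=; rewrite ?mulr1 ?mulr0.
case: (leqP k n.+1) => Hk; last by rewrite Enk_eq0 // wenum_eq0 ?mulr0.
have qa_neq0 := qpow_neq0 (a - 1); have qb_neq0 := qpow_neq0 (b - 1).
rewrite [Enk _ _ _ n.+1 k]/= wenum_rec //.
(* the [set]s shield the arguments of [wenum] from the rewrites of q `^ a, q `^ b *)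
case: k Hk => [|k] Hk; rewrite !IH /qint.
  set F := wenum _ _ _ _ _.
  rewrite big_geq // !add0r addr0 [q `^ b]qpow_pred.
  by rewrite !expr0 exprS; field; rewrite subq_neq0 qb_neq0.
set F0 := wenum _ _ _ _ k; set F1 := wenum _ _ _ _ k.+1.
have qpow_bk : q `^ (b + k.+1%:R - 1) = qb * q ^+ k.+1.
  by rewrite addrAC [in LHS]qpowD qpow_nat.
have qpow_nka : q `^ (n.+1%:R - k.+1%:R + a) = q ^+ n.+1 / q ^+ k.+1 * (qa * q).
  by rewrite [in LHS]qpowD [in LHS]qpowD powRN !qpow_nat [q `^ a]qpow_pred.
have qpow_kb : q `^ (k.+1%:R + b) = q ^+ k.+1 * (qb * q).
  by rewrite [in LHS]qpowD qpow_nat [q `^ b]qpow_pred.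
rewrite qpow_bk qpow_nka qpow_kb !sum_geom // [q `^ a]qpow_pred [q `^ b]qpow_pred.
by rewrite !exprS; field; rewrite subq_neq0 qa_neq0 qb_neq0 q_neq0 expf_neq0.
Qed.

Lemma qweight_rescale (d l r m n : nat) :
  qint q a ^+ l * qint q b ^+ r *
    q `^ ((1 + d%:R - l.+1%:R) * (a - 1) + (n.+1%:R - r.+1%:R) * (b - 1) + m%:R) =
  qa ^+ d * qb ^+ n * (Aw ^+ l * Bw ^+ r * q ^+ m).
Proof.
have qa_neq0 := qpow_neq0 (a - 1); have qb_neq0 := qpow_neq0 (b - 1).
rewrite -!natr1 (_ : (1 + d%:R - (l%:R + 1)) * (a - 1) + (n%:R + 1 - (r%:R + 1)) * (b - 1)
  = d%:R * (a - 1) + n%:R * (b - 1) - (l%:R * (a - 1) + r%:R * (b - 1))); last by ring.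
rewrite [in LHS]qpowD [in LHS]qpowD powRN !qpow_lin qpow_nat.
by rewrite !exprMn !exprVn; field; rewrite !expf_neq0.
Qed.

Lemma sum_perm_wenum n k :
  \sum_(s : 'S_n.+1 | des s == k)
     qint q a ^+ (lrmin s).-1 * qint q b ^+ (rlmin s).-1 * q `^ (majt a b s) =
  qa ^+ k * qb ^+ n * wenum q Aw Bw n.+1 k.
Proof.
rewrite big_mkcond /wenum mulr_sumr -big_pword; apply: eq_bigr => s _.
rewrite /des /lrmin /rlmin /majt /maj /des /lrmin /rlmin.
have w_neq0 : pword s != [::] by rewrite -size_eq0 size_pword.
case: eqP => [<-|_]; last by rewrite mulr0.
rewrite /wweight -(prednK (wlrmin_gt0 w_neq0)) -(prednK (wrlmin_gt0 w_neq0)) /=.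
exact: qweight_rescale.
Qed.

End QAnalogue.

Theorem theorem1p1 (R : realType) (q a b : R) (hq0 : 0 < q) (hq1 : q != 1)
  (n k : nat) (hkn : (k <= n)%N) :
  Enk q a b n k =
  \sum_(s : 'S_n.+1 | des s == k)
     qint q a ^+ (lrmin s).-1 * qint q b ^+ (rlmin s).-1 * q `^ (majt a b s).
Proof.
by rewrite Enk_wenum // sum_perm_wenum.
Qed.
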